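(* Let $\rho$ be a representation of $32_{65}$ over a set $U$, and view it as an edge-coloring of the complete graph on $U$ in which the edge $\{x,y\}$ ($x\ne y$) gets the color $z\in\{a,b,c\}$ with $(x,y)\in\rho(z)$. Then for every edge $x_0x_1$ of color $a$ there is a set of four vertices, disjoint from $\{x_0,x_1\}$, all six of whose edges have color $a$. More precisely, there exist ten distinct vertices $x_0,x_1$, $w_{pq}$ for $(p,q)\in\{b,c\}^2$, $u_p$ and $v_p$ for $p\in\{b,c\}$ such that: $x_0w_{pq}$ has color $p$ and $w_{pq}x_1$ has color $q$; $x_0u_p$ has color $a$ and $u_px_1$ has color $p$; $x_0v_p$ has color $p$ and $v_px_1$ has color $a$; all edges among the four vertices $w_{pq}$ have color $a$; and every edge between a vertex $w_{pq}$ and a vertex $u_{p'}$ or $v_{p'}$ has color $a$.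
   Context: $32_{65}$ is the finite integral symmetric relation algebra with atoms $1'$, $a$, $b$, $c$, all symmetric, in which a diversity cycle $xyz$ (with $x,y,z\in\{a,b,c\}$) is mandatory (i.e. $x;y\ge z$) if it involves $a$ and forbidden (i.e. $x;y\cdot z=0$) otherwise. A representation over a set $U$ is an embedding $\rho$ into the full relation algebra $\langle\mathcal P(U\times U),\cup,{}^c,\circ,{}^{-1},\mathrm{Id}_U\rangle$. *)

From HB Require Import structures.
From mathcomp Require Import all_boot.
From Stdlib Require Import List.
Set Implicit Arguments. Unset Strict Implicit. Unset Printing Implicit Defensive.

(** Atoms of 32_65: the identity 1' (written [e]) and the diversity atoms a, b, c. *)
Inductive atom := e | a | b | c.

Definition atom_to_ord (x : atom) : 'I_4 :=
  match x with e => inord 0 | a => inord 1 | b => inord 2 | c => inord 3 end.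
Definition ord_to_atom (i : 'I_4) : option atom :=
  match val i with 0 => Some e | 1 => Some a | 2 => Some b | 3 => Some c | _ => None end.
Lemma atom_ordK : pcancel atom_to_ord ord_to_atom.
Proof. by case; rewrite /ord_to_atom /= inordK. Qed.
HB.instance Definition _ := Finite.copy atom (pcan_type atom_ordK).

(** Allowed (non-forbidden) cycles:  z <= x ; y  in 32_65. *)
Definition allowed (x y z : atom) : bool :=
  if x == e then y == z else
  if y == e then x == z else
  if z == e then x == y else
  [|| x == a, y == a | z == a].

Definition RA := {set atom}.
Definition ra_comp (X Y : RA) : RA :=
  [set z | [exists x in X, exists y in Y, allowed x y z]].
Definition ra_conv (X : RA) : RA := X.   (* all atoms symmetric *)
Definition ra_id : RA := [set e].

Definition rel_eq {U : Type} (R S : U -> U -> Prop) := forall x y, R x y <-> S x y.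

Definition representation {U : Type} (rho : RA -> U -> U -> Prop) : Prop :=
  (forall X Y, rel_eq (rho (X :|: Y)) (fun x y => rho X x y \/ rho Y x y)) /\
  (forall X, rel_eq (rho (~: X)) (fun x y => ~ rho X x y)) /\
  (forall X Y, rel_eq (rho (ra_comp X Y))
                      (fun x z => exists y, rho X x y /\ rho Y y z)) /\
  (forall X, rel_eq (rho (ra_conv X)) (fun x y => rho X y x)) /\
  rel_eq (rho ra_id) (fun x y => x = y) /\
  (forall X Y, rel_eq (rho X) (rho Y) -> X = Y).

Definition colour {U : Type} (rho : RA -> U -> U -> Prop) (z : atom) (x y : U) : Prop :=
  rho [set z] x y.

(* Every diversity cycle through a is mandatory, so the a-edge x0 x1 factors
   as p;q for every pair of diversity atoms p, q.  Together with x0 and x1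
   (whose colours towards x0, x1 are 1';a and a;1') this gives ten vertices,
   pairwise distinct because a vertex determines its pair of colours towards
   x0 and x1.  A triangle with two sides coloured b or c is a forbidden cycle
   unless its third side is a, so distinct vertices joined to a common vertex
   by b- or c-edges are a-joined: the w_pq and the v_p all see x0 in b or c,
   and the w_pq and the u_p all see x1 in b or c. *)

From HB Require Import structures.
From mathcomp Require Import all_boot.
From Stdlib Require Import List Classical.
Import ListNotations.

Set Implicit Arguments.
Unset Strict Implicit.

Definition atom_eqb (x y : atom) : bool :=
  match x, y with e, e | a, a | b, b | c, c => true | _, _ => false end.

Lemma atom_eqE (x y : atom) : (x == y) = atom_eqb x y.
Proof. by apply/eqP/idP => [->|]; [case: y | case: x; case: y]. Qed.

Definition diversity (p : atom) : bool := if p is e then false else true.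

Lemma allowed_a (p q : atom) : diversity p -> diversity q -> allowed p q a.
Proof. by rewrite /allowed !atom_eqE; case: p => //; case: q. Qed.

Lemma Forall2_In_l (A B : Type) (R : A -> B -> Prop) l s x :
  Forall2 R l s -> In x l -> exists2 y, In y s & R x y.
Proof.
move=> Rls; elim: l s / Rls => [//|x' y l' s' Rxy _ IH] /= [<-|/IH [y' s'y' Rxy']].
- by exists y; first left.
- by exists y'; first right.
Qed.

Lemma NoDup_Forall2_functional (A B : Type) (R : A -> B -> Prop) l s :
  (forall x y y', R x y -> R x y' -> y = y') ->
  Forall2 R l s -> NoDup s -> NoDup l.
Proof.
move=> Rfun Rls; elim: l s / Rls => [_|x y l' s' Rxy Rl's' IH /NoDup_cons_iff [s'y nd_s']].
  exact: NoDup_nil.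
constructor; last exact: IH.
by case/(Forall2_In_l Rl's') => y' s'y' /(Rfun _ _ _ Rxy) Eyy'; rewrite Eyy' in s'y.
Qed.

Lemma NoDup_app_neq (A : Type) (l1 l2 : list A) x y :
  NoDup (l1 ++ l2)%list -> In x l1 -> In y l2 -> x <> y.
Proof.
move=> + x_l1 y_l2 Exy; have [l [l' ->]] := in_split x l1 x_l1.
rewrite Exy -app_assoc /= => nd.
by apply: (NoDup_remove_2 _ _ _ nd); apply/in_or_app; right; apply/in_or_app; right.
Qed.

Section Representation.

Variables (U : Type) (rho : RA -> U -> U -> Prop).
Hypothesis rho_repr : representation rho.

Lemma rho_subset (X Y : RA) x y : X \subset Y -> rho X x y -> rho Y x y.
Proof.
case: rho_repr => rhoU _ /setUidPr <- rhoX.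
by apply/rhoU; left.
Qed.

Lemma colour_e x y : colour rho e x y <-> x = y.
Proof. by case: rho_repr => _ [_ [_ [_ [rho_id _]]]]; apply: rho_id. Qed.

Lemma colour_sym z x y : colour rho z x y -> colour rho z y x.
Proof. by case: rho_repr => _ [_ [_ [rho_conv _]]] xy; apply/(rho_conv [set z] y x). Qed.

Lemma colour_unique p q x y : colour rho p x y -> colour rho q x y -> p = q.
Proof.
case: rho_repr => _ [rhoC _] xy_p xy_q; case: (eqVneq p q) => // npq.
have : rho (~: [set q]) x y.
  by apply: rho_subset xy_p; rewrite sub1set !inE.
by move/rhoC.
Qed.

Lemma rho_setT x y : rho setT x y.
Proof.
case: rho_repr => rhoU [rhoC _].
rewrite -(setUCr [set e]); apply/rhoU.
by case: (classic (rho [set e] x y)) => H; [left | right; apply/rhoC].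
Qed.

Lemma colour_total x y : exists z, colour rho z x y.
Proof.
case: rho_repr => rhoU _.
have := rho_setT x y.
have -> : setT = [set e] :|: ([set a] :|: ([set b] :|: [set c])).
  by apply/setP => z; rewrite !inE; case: z; rewrite ?atom_eqE.
case/rhoU => [|/rhoU [|/rhoU []]]; by eexists; eassumption.
Qed.

Lemma ra_comp_set1 p q z : (z \in ra_comp [set p] [set q]) = allowed p q z.
Proof.
rewrite inE; apply/existsP/idP => [[x /andP [/set1P -> /existsP [y]]]|pqz].
  by case/andP => /set1P ->.
by exists p; rewrite set11 /=; apply/existsP; exists q; rewrite set11.
Qed.

Lemma colour_factor p q z x y :
  allowed p q z -> colour rho z x y -> exists m, colour rho p x m /\ colour rho q m y.
Proof.
case: rho_repr => _ [_ [rho_comp _]] pqz xy_z.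
apply/rho_comp; apply: rho_subset xy_z.
by rewrite sub1set ra_comp_set1.
Qed.

Lemma colour_cycle p q z x m y :
  colour rho p x m -> colour rho q m y -> colour rho z x y -> allowed p q z.
Proof.
case: rho_repr => _ [rhoC [rho_comp _]] xm_p my_q xy_z.
apply/negPn/negP => forbidden.
have : rho (~: ra_comp [set p] [set q]) x y.
  by apply: rho_subset xy_z; rewrite sub1set in_setC ra_comp_set1.
by move/rhoC; apply; apply/rho_comp; exists m.
Qed.

Lemma colour_a_factor x y : colour rho a x y -> forall p q,
  diversity p -> diversity q -> exists m, colour rho p x m /\ colour rho q m y.
Proof. by move=> xy_a p q p_div q_div; apply/colour_factor/allowed_a: xy_a. Qed.

Lemma NoDup_of_profiles x0 x1 (l : list U) (s : list (atom * atom)) :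
  Forall2 (fun y pq => colour rho pq.1 x0 y /\ colour rho pq.2 y x1) l s ->
  NoDup s -> NoDup l.
Proof.
apply: NoDup_Forall2_functional => y [p q] [p' q'] /= [x0y yx1] [x0y' yx1'].
by rewrite (colour_unique x0y x0y') (colour_unique yx1 yx1').
Qed.

Lemma bc_neighbours_colour_a x w w' :
  colour rho b x w \/ colour rho c x w -> colour rho b x w' \/ colour rho c x w' ->
  w <> w' -> colour rho a w w'.
Proof.
move=> xw xw' nww'; have [z ww'_z] := colour_total w w'.
have cycle p q : colour rho p x w -> colour rho q x w' -> allowed p q z.
  by move=> /colour_sym wx_p xw'_q; apply: colour_cycle wx_p xw'_q ww'_z.
case: z ww'_z cycle => [/colour_e/nww' []|ww' _ //|_ cycle|_ cycle];
  by case: xw xw' => [xw|xw] [xw'|xw']; move: (cycle _ _ xw xw'); rewrite /allowed !atom_eqE.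
Qed.

Definition bc_star (x : U) (ws : list U) :=
  forall w, In w ws -> colour rho b x w \/ colour rho c x w.

Lemma bc_star_colour_a x ws ts w t :
  bc_star x ws -> bc_star x ts -> In w ws -> In t ts -> w <> t -> colour rho a w t.
Proof. by move=> ws_star ts_star /ws_star xw /ts_star xt; apply: bc_neighbours_colour_a xw xt. Qed.

End Representation.

Theorem mainTheorem6 (U : Type) (rho : RA -> U -> U -> Prop) :
  representation rho ->
  forall x0 x1 : U, colour rho a x0 x1 ->
  exists (wbb wbc wcb wcc ub uc vb vc : U),
    NoDup [x0; x1; wbb; wbc; wcb; wcc; ub; uc; vb; vc] /\
    (* x0 w_pq has colour p, w_pq x1 has colour q *)
    colour rho b x0 wbb /\ colour rho b wbb x1 /\
    colour rho b x0 wbc /\ colour rho c wbc x1 /\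
    colour rho c x0 wcb /\ colour rho b wcb x1 /\
    colour rho c x0 wcc /\ colour rho c wcc x1 /\
    (* x0 u_p has colour a, u_p x1 has colour p *)
    colour rho a x0 ub /\ colour rho b ub x1 /\
    colour rho a x0 uc /\ colour rho c uc x1 /\
    (* x0 v_p has colour p, v_p x1 has colour a *)
    colour rho b x0 vb /\ colour rho a vb x1 /\
    colour rho c x0 vc /\ colour rho a vc x1 /\
    (* all edges among the w_pq have colour a *)
    (forall w w', In w [wbb; wbc; wcb; wcc] -> In w' [wbb; wbc; wcb; wcc] ->
       w <> w' -> colour rho a w w') /\
    (* every edge between a w_pq and a u_p' or v_p' has colour a *)
    (forall w t, In w [wbb; wbc; wcb; wcc] -> In t [ub; uc; vb; vc] ->
       colour rho a w t).
Proof.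
move=> repr x0 x1 x0x1.
have factor := colour_a_factor repr x0x1.
have [wbb [x0_wbb wbb_x1]] := factor b b isT isT.
have [wbc [x0_wbc wbc_x1]] := factor b c isT isT.
have [wcb [x0_wcb wcb_x1]] := factor c b isT isT.
have [wcc [x0_wcc wcc_x1]] := factor c c isT isT.
have [ub [x0_ub ub_x1]] := factor a b isT isT.
have [uc [x0_uc uc_x1]] := factor a c isT isT.
have [vb [x0_vb vb_x1]] := factor b a isT isT.
have [vc [x0_vc vc_x1]] := factor c a isT isT.
have x0_x0 : colour rho e x0 x0 by apply/(colour_e repr).
have x1_x1 : colour rho e x1 x1 by apply/(colour_e repr).
have nodup : NoDup [x0; x1; wbb; wbc; wcb; wcc; ub; uc; vb; vc].
  apply: (NoDup_of_profiles repr (x0 := x0) (x1 := x1)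
    (s := [(e, a); (a, e); (b, b); (b, c); (c, b); (c, c); (a, b); (a, c); (b, a); (c, a)])).
  - by repeat constructor.
  - by repeat constructor; simpl; intuition discriminate.
have W0 : bc_star rho x0 [wbb; wbc; wcb; wcc] by move=> w /= [<-|[<-|[<-|[<-|[]]]]]; auto.
have W1 : bc_star rho x1 [wbb; wbc; wcb; wcc].
  by move=> w /= [<-|[<-|[<-|[<-|[]]]]]; auto using colour_sym.
have U1 : bc_star rho x1 [ub; uc] by move=> w /= [<-|[<-|[]]]; auto using colour_sym.
have V0 : bc_star rho x0 [vb; vc] by move=> w /= [<-|[<-|[]]]; auto.
exists wbb, wbc, wcb, wcc, ub, uc, vb, vc.
do 17 (split; first done).
have W_UV : NoDup ([wbb; wbc; wcb; wcc] ++ [ub; uc; vb; vc])%list.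
  exact: NoDup_app_remove_l [x0; x1] _ nodup.
split=> [w w'|w t w_W t_UV]; first exact: (bc_star_colour_a repr W0 W0).
have nwt := NoDup_app_neq W_UV w_W t_UV.
case: (in_app_or [ub; uc] [vb; vc] t t_UV) => t_in.
- exact: (bc_star_colour_a repr W1 U1 w_W t_in nwt).
- exact: (bc_star_colour_a repr W0 V0 w_W t_in nwt).
Qed.
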